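(* For any field $\mathbb{F}$, $l_0(M_2(\mathbb{F}))=2$; that is, the maximum of $l_0(\mathcal S)$ over all finite generating sets $\mathcal S$ of $M_2(\mathbb{F})$ equals $2$.
   Context: For a finite subset $\mathcal S$ of $M_n(\mathbb{F})$: a word of length $m$ in $\mathcal S$ is a product $S_1\cdots S_m$ with $S_j\in\mathcal S$. $\mathcal L_k^0(\mathcal S)$ is the linear span of all words of length between $1$ and $k$ (the identity is not automatically included), and $\mathcal L^0(\mathcal S)=\bigcup_k\mathcal L^0_k(\mathcal S)$. $\mathcal S$ is a generating set of $M_n(\mathbb{F})$ if the algebra it generates (with or without adjoining the identity; these coincide for $M_n(\mathbb{F})$) is $M_n(\mathbb{F})$. $l_0(\mathcal S)$ is the smallest $k$ with $\mathcal L_k^0(\mathcal S)=\mathcal L_{k+1}^0(\mathcal S)$, and $l_0(M_n(\mathbb{F}))$ is the maximum of $l_0(\mathcal S)$ over all finite generating sets $\mathcal S$ of $M_n(\mathbb{F})$. *)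

From HB Require Import structures.
From mathcomp Require Import all_boot all_order all_algebra.
Set Implicit Arguments. Unset Strict Implicit. Unset Printing Implicit Defensive.
Import GRing.Theory.
Local Open Scope ring_scope.

Section Words.
Variables (F : fieldType) (n : nat).

Fixpoint words (S : seq 'M[F]_n.+1) (m : nat) : seq 'M[F]_n.+1 :=
  match m with
  | 0 => [:: 1]
  | m'.+1 => [seq A * B | A <- S, B <- words S m']
  end.

Definition L0 (S : seq 'M[F]_n.+1) (k : nat) : {vspace 'M[F]_n.+1} :=
  (<< flatten [seq words S m | m <- iota 1 k] >>)%VS.

(* S generates M_n(F): the (non-unital) algebra generated, i.e. the union of
   the increasing chain L_k^0(S), is the whole matrix algebra *)
Definition generates (S : seq 'M[F]_n.+1) : Prop :=
  exists k, L0 S k = fullv.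

Definition is_l0 (S : seq 'M[F]_n.+1) (k : nat) : Prop :=
  L0 S k = L0 S k.+1 /\ (forall j, (j < k)%N -> L0 S j <> L0 S j.+1).

End Words.

From HB Require Import structures.
From mathcomp Require Import all_boot all_order all_algebra.
From mathcomp Require Import falgebra ring.

Set Implicit Arguments. Unset Strict Implicit. Unset Printing Implicit Defensive.
Import GRing.Theory.
Local Open Scope ring_scope.

(* With U = span S one has L_(k+1) = U + U * L_k, so the chain L_k stabilises
   exactly when it reaches M_n(F), a subspace containing S and stable under
   left multiplication by S being everything when S generates.  For n = 2:
   if dim U >= 3, either L_1 = L_2 (so L_1 is everything) or dim L_2 = 4.
   If dim U <= 2, write U = span {x, y}; the 2x2 Cayley-Hamilton identity and
   its polarisation xy + yx \in span {x, y, 1} put every word of length 3 in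
   x, y into U + U * U = L_2, so L_2 is already stable.  The off-diagonal
   matrix units show that the bound 2 is attained. *)

Lemma span_mul (K : fieldType) (aT : falgType K) (X Y : seq aT) :
  (<<X>> * <<Y>> = <<[seq (x * y)%R | x <- X, y <- Y]>>)%VS.
Proof.
rewrite !span_def big_distrl big_allpairs_dep /=; apply: eq_bigr => x _.
by rewrite big_distrr; apply: eq_bigr => y _; exact: prodv_line.
Qed.

Section Chain.
Variables (F : fieldType) (n : nat) (S : seq 'M[F]_n.+1).

Lemma span_wordsS m : (<<words S m.+1>> = <<S>> * <<words S m>>)%VS.
Proof. by rewrite span_mul. Qed.

Lemma span_words1 : <<words S 1>>%VS = <<S>>%VS.
Proof. by rewrite span_wordsS span_seq1 prodv1. Qed.

Lemma L0E k : L0 S k = (\sum_(1 <= m < k.+1) <<words S m>>)%VS.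
Proof.
rewrite /L0 span_def big_flatten big_map /index_iota subn1 /=.
by apply: eq_bigr => m _; rewrite span_def.
Qed.

Lemma L0_0 : L0 S 0 = 0%VS.
Proof. by rewrite L0E big_geq. Qed.

Lemma L0_1 : L0 S 1 = <<S>>%VS.
Proof. by rewrite L0E big_nat1 span_words1. Qed.

Lemma L0S k : L0 S k.+1 = (<<S>> + <<S>> * L0 S k)%VS.
Proof.
rewrite !L0E big_nat_recl // span_words1 big_distrr /=; congr (_ + _)%VS.
by apply: eq_bigr => m _; rewrite span_wordsS.
Qed.

Lemma span_sub_L0 k : (<<S>> <= L0 S k.+1)%VS.
Proof. by rewrite L0S addvSl. Qed.

Lemma prodv_sub_L0 k : (<<S>> * L0 S k <= L0 S k.+1)%VS.
Proof. by rewrite L0S addvSr. Qed.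

Lemma L0_mono k : (L0 S k <= L0 S k.+1)%VS.
Proof.
elim: k => [|k IHk]; first by rewrite L0_0 sub0v.
by rewrite (L0S k) (L0S k.+1) addvS ?prodvSr.
Qed.

Lemma L0_min (W : {vspace 'M[F]_n.+1}) k :
  (<<S>> <= W)%VS -> (<<S>> * W <= W)%VS -> (L0 S k <= W)%VS.
Proof.
move=> sSW sSWW; elim: k => [|k IHk]; first by rewrite L0_0 sub0v.
by rewrite L0S subv_add sSW (subv_trans (prodvSr _ IHk)).
Qed.

Lemma generates_min (W : {vspace 'M[F]_n.+1}) :
  generates S -> (<<S>> <= W)%VS -> (<<S>> * W <= W)%VS -> W = fullv.
Proof.
move=> [k L0k_full] sSW sSWW; apply/eqP; rewrite eqEsubv subvf -L0k_full.
exact: L0_min.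
Qed.

Lemma L0_stable_full k : generates S -> L0 S k = L0 S k.+1 -> L0 S k = fullv.
Proof.
move=> genS L0k_stable; apply: generates_min => //.
  by rewrite L0k_stable span_sub_L0.
by rewrite {2}L0k_stable prodv_sub_L0.
Qed.

Lemma L0_succ_full k : L0 S k = fullv -> L0 S k.+1 = fullv.
Proof. by move=> L0k_full; apply/eqP; rewrite eqEsubv subvf -L0k_full L0_mono. Qed.
End Chain.

Section TwoByTwo.
Variable R : comNzRingType.
Implicit Types A B : 'M[R]_2.

Lemma ord2P (i : 'I_2) : i = 0 \/ i = 1.
Proof. by case: i => -[|[|//]] ?; [left | right]; apply: val_inj. Qed.

Lemma sum_ord2 (V : nmodType) (f : 'I_2 -> V) : \sum_i f i = f 0 + f 1.
Proof. by rewrite !big_ord_recl big_ord0 addr0; congr (_ + f _); apply: val_inj. Qed.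

Lemma mxtrace2 A : \tr A = A 0 0 + A 1 1.
Proof. exact: sum_ord2. Qed.

Lemma det_mx22 A : \det A = A 0 0 * A 1 1 - A 0 1 * A 1 0.
Proof.
rewrite (expand_det_row _ 0) sum_ord2 /cofactor !det_mx11 !mxE /=.
have -> : lift 0 0 = 1 :> 'I_2 by apply: val_inj.
have -> : lift 1 0 = 0 :> 'I_2 by apply: val_inj.
by rewrite expr0 expr1 mul1r mulN1r mulrN.
Qed.

Lemma matrix2P A B :
  A 0 0 = B 0 0 -> A 0 1 = B 0 1 -> A 1 0 = B 1 0 -> A 1 1 = B 1 1 -> A = B.
Proof.
move=> e00 e01 e10 e11; apply/matrixP => i j.
by case: (ord2P i) => ->; case: (ord2P j) => ->.
Qed.

Lemma mx2_sqr A : A * A = \tr A *: A - \det A *: 1.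
Proof. by apply: matrix2P; rewrite !(mxE, sum_ord2, mxtrace2, det_mx22) /=; ring. Qed.

Lemma mx2_anticomm A B :
  A * B + B * A = \tr A *: B + \tr B *: A + (\tr (A * B) - \tr A * \tr B) *: 1.
Proof. by apply: matrix2P; rewrite !(mxE, sum_ord2, mxtrace2, det_mx22) /=; ring. Qed.
End TwoByTwo.

Lemma mx2_cube_mem (F : fieldType) (W : {vspace 'M[F]_2}) (x y : 'M[F]_2) :
  x \in W -> y \in W -> x * x \in W -> x * y \in W ->
  [/\ x * x * y \in W, x * y * y \in W & x * y * x \in W].
Proof.
move=> Wx Wy Wxx Wxy.
have Wxxy : x * x * y \in W.
  by rewrite mx2_sqr mulrBl -!scalerAl mul1r rpredB ?rpredZ.
split=> //.
  by rewrite -mulrA mx2_sqr mulrBr -!scalerAr mulr1 rpredB ?rpredZ.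
rewrite -mulrA.
have -> : y * x = (x * y + y * x) - x * y by rewrite addrC addKr.
rewrite mx2_anticomm mulrBr !mulrDr -!scalerAr mulr1 mulrA.
by rewrite !(rpredB, rpredD, rpredZ).
Qed.

Lemma dimv_le2_span (K : fieldType) (vT : vectType K) (U : {vspace vT}) :
  (\dim U <= 2)%N -> exists x y, U = <<[:: x; y]>>%VS.
Proof.
move=> dimU; set b := vbasis U.
have Ub i : b`_i \in U.
  by case: (ltnP i (size b)) => [/mem_nth/vbasis_mem // | ?]; rewrite nth_default ?mem0v.
exists b`_0, b`_1; apply/subv_anti/andP; split.
  rewrite -{1}(span_basis (vbasisP U)); apply/span_subvP => _ /(nthP 0)[i lt_i <-].
  move: lt_i; rewrite size_tuple => /leq_trans/(_ dimU).
  by case: i => [|[|//]] _; rewrite memv_span ?inE ?eqxx ?orbT.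
by apply/span_subvP => v; rewrite !inE => /orP[]/eqP->.
Qed.

Lemma prodv_span2_cube (F : fieldType) (x y : 'M[F]_2) :
  (<<[:: x; y]>> * <<[:: x; y]>> * <<[:: x; y]>> <=
     <<[:: x; y]>> + <<[:: x; y]>> * <<[:: x; y]>>)%VS.
Proof.
pose W := <<[:: x; y; (x * x)%R; (x * y)%R; (y * x)%R; (y * y)%R]>>%VS.
rewrite !span_mul -span_cat -/W.
have cube u v : u \in [:: x; y] -> v \in [:: x; y] ->
    [/\ u * u * v \in W, u * v * v \in W & u * v * u \in W].
  rewrite !inE => /orP[]/eqP-> /orP[]/eqP->;
  by apply: mx2_cube_mem; apply: memv_span; rewrite !inE eqxx ?orbT.
have x_xy : x \in [:: x; y] by rewrite mem_head.
have y_xy : y \in [:: x; y] by rewrite !inE eqxx orbT.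
have [xxx _ _] := cube x x x_xy x_xy; have [xxy xyy xyx] := cube x y x_xy y_xy.
have [yyx yxx yxy] := cube y x y_xy x_xy; have [yyy _ _] := cube y y y_xy y_xy.
apply/span_subvP => _ /allpairsP[[uv w] [/= uv_xy w_xy ->]].
by move: uv_xy w_xy; rewrite !inE => /or4P[]/eqP-> /orP[]/eqP->.
Qed.

Lemma L0_2_full (F : fieldType) (S : seq 'M[F]_2) : generates S -> L0 S 2 = fullv.
Proof.
move=> genS; have [le_dim2 | gt_dim2] := leqP (\dim <<S>>) 2.
  have [x [y defS]] := dimv_le2_span le_dim2.
  apply: (generates_min genS); first exact: span_sub_L0.
  rewrite L0S L0_1 prodvDr subv_add addvSr prodvA defS andTb.
  exact: prodv_span2_cube.
have [L1_stable | L1_grows] := eqVneq (L0 S 1) (L0 S 2).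
  by rewrite -L1_stable (L0_stable_full genS L1_stable).
have dim_grows : (\dim (L0 S 1) < \dim (L0 S 2))%N.
  by rewrite (ltn_leqif (dimv_leqif_eq (L0_mono S 1))).
apply/eqP; rewrite eqEdim subvf dimvf dim_matrix.
by rewrite -L0_1 in gt_dim2; apply: leq_ltn_trans gt_dim2 dim_grows.
Qed.

Lemma offdiag_L0_2_full (F : fieldType) :
  L0 [:: delta_mx 0 1; delta_mx 1 0] 2 = fullv :> {vspace 'M[F]_2}.
Proof.
set S := [:: _; _].
have inS u : u \in S -> u \in L0 S 2.
  by move=> Su; apply: subvP (span_sub_L0 S 1) _ (memv_span Su).
have inSS u v : u \in S -> v \in S -> u * v \in L0 S 2.
  by move=> Su Sv; apply: subvP (prodv_sub_L0 S 1) _ _; rewrite L0_1 memv_mul ?memv_span.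
have e01 : delta_mx 0 1 \in S by rewrite mem_head.
have e10 : delta_mx 1 0 \in S by rewrite !inE eqxx orbT.
apply/eqP; rewrite eqEsubv subvf; apply/subvP => A _.
rewrite [A]matrix_sum_delta; apply: memv_suml => i _; apply: memv_suml => j _.
apply: memvZ; case: (ord2P i) => ->; case: (ord2P j) => ->.
- by rewrite -(mul_delta_mx (1 : 'I_2)) mulmxE inSS.
- exact: inS.
- exact: inS.
- by rewrite -(mul_delta_mx (0 : 'I_2)) mulmxE inSS.
Qed.

Theorem mainTheorem3 (F : fieldType) :
  (forall (S : seq 'M[F]_2) (k : nat), generates S -> is_l0 S k -> (k <= 2)%N) /\
  (exists S : seq 'M[F]_2, generates S /\ is_l0 S 2).
Proof.
split.
  move=> S k genS [_ L0_strict]; rewrite leqNgt; apply/negP => gt_k2.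
  have L2_full := L0_2_full genS.
  by apply: (L0_strict 2 gt_k2); rewrite (L0_succ_full L2_full) L2_full.
pose S : seq 'M[F]_2 := [:: delta_mx 0 1; delta_mx 1 0].
have L2_full : L0 S 2 = fullv := offdiag_L0_2_full F.
have genS : generates S by exists 2.
exists S; split=> //; split; first by rewrite (L0_succ_full L2_full) L2_full.
move=> j lt_j2 /(L0_stable_full genS) Lj_full.
have : (\dim (L0 S j) <= 2)%N.
  by case: j lt_j2 {Lj_full} => [|[|//]] _; rewrite ?L0_0 ?dimv0 // L0_1 dim_span.
by rewrite Lj_full dimvf dim_matrix.
Qed.
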